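(* Let $s>0$, $Y>0$, $\tau\geq0$, and assume both components of $E_+=(x_+(\tau),y_+(\tau))=\left(\frac sYe^{s\tau},1-\frac sYe^{s\tau}\right)$ are positive. Let $p(\tau)=s\left(1+\frac{e^{s\tau}}{Y}\right)$, $q=-s$, $c(\tau)=s\left(1-\frac{2se^{s\tau}}{Y}\right)$, $\alpha(\tau)=\frac{s^2e^{s\tau}}{Y}$, and consider the characteristic equation \[ \lambda^2+p(\tau)\lambda+(q\lambda+c(\tau))e^{-\lambda\tau}+\alpha(\tau)=0 \tag{C} \] and the equation in $\omega$ \[ \omega^4+(p(\tau)^2-q^2-2\alpha(\tau))\omega^2+\alpha(\tau)^2-c(\tau)^2=0. \tag{Q} \] Let $\tau^*=\frac1s\ln\left(\frac{Y}{3s}\right)$ and \[ \omega_+(\tau)=\sqrt{\tfrac12\left(-x_+(\tau)^2+\sqrt{x_+(\tau)^4+s^2\left(12x_+(\tau)^2-16x_+(\tau)+4\right)}\right)}. \] \begin{enumerate} \item $\omega_+(\tau^* )=0$. If $\tau\geq\tau^*$, then (Q) has no positive real root, and therefore (C) has no purely imaginary roots. In particular, if $\frac sY\geq\frac13$, then $\tau^*\leq0$ and there can be no Hopf bifurcation of $E_+$ for any $\tau\geq0$. \item Assume $\frac sY<\frac13$, so $\tau^*>0$. If $\tau\in[0,\tau^* )$, then $x_+(\tau)\in[\frac sY,\frac13)$ and (Q) has exactly one positive real root, namely $\omega_+(\tau)$. If (C) has purely imaginary roots at $\tau$ (so $\tau$ is a candidate for a Hopf bifurcation of $E_+$), then $\tau\in(0,\tau^*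 )$ and these roots are $\pm i\omega_+(\tau)$ with $\omega_+(\tau)$ given by the formula above. \end{enumerate}
   Context: (C) is the characteristic equation of the linearization at $E_+$ of the delay system $\dot x=x(1-x)-yx$, $\dot y=-sy+Ye^{-s\tau}y(t-\tau)x(t-\tau)$; (Q) is obtained from substituting $\lambda=i\omega$, $\omega>0$, into (C) and eliminating $\tau\omega$. *)

From Stdlib Require Import Reals.
From Coquelicot Require Import Coquelicot.
Open Scope R_scope.

Definition Cexp (z : C) : C :=
  (exp (Re z) * cos (Im z), exp (Re z) * sin (Im z)).

Definition xplus (s Y tau : R) : R := s / Y * exp (s * tau).
Definition yplus (s Y tau : R) : R := 1 - s / Y * exp (s * tau).

Definition pc (s Y tau : R) : R := s * (1 + exp (s * tau) / Y).
Definition qc (s : R) : R := - s.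
Definition cc (s Y tau : R) : R := s * (1 - 2 * s * exp (s * tau) / Y).
Definition alphac (s Y tau : R) : R := s ^ 2 * exp (s * tau) / Y.

Definition charC (s Y tau : R) (lam : C) : Prop :=
  (lam * lam + RtoC (pc s Y tau) * lam
   + (RtoC (qc s) * lam + RtoC (cc s Y tau)) * Cexp (- lam * RtoC tau)
   + RtoC (alphac s Y tau))%C = RtoC 0.

Definition purely_imaginary (lam : C) : Prop := Re lam = 0 /\ lam <> RtoC 0.

Definition eqQ (s Y tau omega : R) : Prop :=
  omega ^ 4 + (pc s Y tau ^ 2 - qc s ^ 2 - 2 * alphac s Y tau) * omega ^ 2
  + alphac s Y tau ^ 2 - cc s Y tau ^ 2 = 0.

Definition tau_star (s Y : R) : R := / s * ln (Y / (3 * s)).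

Definition omega_plus (s Y tau : R) : R :=
  let x := xplus s Y tau in
  sqrt (/ 2 * (- x ^ 2 + sqrt (x ^ 4 + s ^ 2 * (12 * x ^ 2 - 16 * x + 4)))).

(* In terms of x = x_+(τ), equation (Q) is the biquadratic
   ω⁴ + x²ω² + s²(3x − 1)(1 − x) = 0, whose constant term changes sign exactly at
   x = 1/3. Since x_+ is increasing in τ and equals 1/3 at τ*, (Q) has no positive
   root for τ ≥ τ* and exactly one, ω_+(τ), for τ < τ*. A root iω of (C) gives,
   after separating real and imaginary parts and eliminating the phase ωτ through
   cos² + sin² = 1, a root |ω| of (Q). At τ = 0 the imaginary part alone reads
   (p + q)ω = 0 with p + q = x_+(0) > 0, so no purely imaginary root exists there. *)

From Stdlib Require Import Reals Lra.
From Coquelicot Require Import Coquelicot.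
Open Scope R_scope.

Definition biquad_root (b c : R) : R := sqrt (/ 2 * (- b + sqrt (b ^ 2 - 4 * c))).

Lemma biquad_no_pos_root b c w :
  0 <= b -> 0 <= c -> 0 < w -> w ^ 4 + b * w ^ 2 + c <> 0.
Proof.
  intros hb hc hw.
  assert (0 < w ^ 4) by (apply pow_lt; lra).
  assert (0 <= b * w ^ 2) by (apply Rmult_le_pos; [lra | apply pow2_ge_0]).
  lra.
Qed.

Lemma biquad_root_c0 b : 0 <= b -> biquad_root b 0 = 0.
Proof.
  intro hb; unfold biquad_root.
  replace (b ^ 2 - 4 * 0) with (b ^ 2) by ring.
  rewrite sqrt_pow2 by lra.
  replace (/ 2 * (- b + b)) with 0 by ring.
  apply sqrt_0.
Qed.

Section BiquadNegativeConstant.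

Variables b c : R.
Hypothesis hc : c < 0.

Lemma abs_lt_sqrt_discr : Rabs b < sqrt (b ^ 2 - 4 * c).
Proof.
  rewrite <- sqrt_Rsqr_abs, Rsqr_pow2.
  apply sqrt_lt_1_alt; split; [apply pow2_ge_0 | lra].
Qed.

Lemma biquad_root_sq_pos : 0 < / 2 * (- b + sqrt (b ^ 2 - 4 * c)).
Proof. pose proof abs_lt_sqrt_discr; pose proof (Rle_abs b); lra. Qed.

Lemma biquad_root_pos : 0 < biquad_root b c.
Proof. apply sqrt_lt_R0, biquad_root_sq_pos. Qed.

Lemma biquad_root_sq : biquad_root b c ^ 2 = / 2 * (- b + sqrt (b ^ 2 - 4 * c)).
Proof. apply pow2_sqrt; left; apply biquad_root_sq_pos. Qed.

Lemma biquad_root_sq_quadratic :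
  (biquad_root b c ^ 2) ^ 2 + b * biquad_root b c ^ 2 + c = 0.
Proof.
  rewrite biquad_root_sq.
  assert (hr : sqrt (b ^ 2 - 4 * c) ^ 2 = b ^ 2 - 4 * c)
    by (apply pow2_sqrt; pose proof (pow2_ge_0 b); lra).
  replace ((/ 2 * (- b + sqrt (b ^ 2 - 4 * c))) ^ 2
           + b * (/ 2 * (- b + sqrt (b ^ 2 - 4 * c))) + c)
    with ((sqrt (b ^ 2 - 4 * c) ^ 2 - (b ^ 2 - 4 * c)) / 4) by field.
  rewrite hr; field.
Qed.

Lemma biquad_root_spec : biquad_root b c ^ 4 + b * biquad_root b c ^ 2 + c = 0.
Proof.
  replace (biquad_root b c ^ 4) with ((biquad_root b c ^ 2) ^ 2) by ring.
  apply biquad_root_sq_quadratic.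
Qed.

(* Both v² and the root's square solve t² + bt + c = 0, and the other root of
   that quadratic is negative. *)
Lemma biquad_pos_root_unique v :
  0 < v -> v ^ 4 + b * v ^ 2 + c = 0 -> v = biquad_root b c.
Proof.
  intros hv hQ.
  pose proof biquad_root_sq_quadratic as hu.
  rewrite biquad_root_sq in hu.
  set (u := / 2 * (- b + sqrt (b ^ 2 - 4 * c))) in hu.
  assert (hsum : 0 < v ^ 2 + u + b).
  { pose proof abs_lt_sqrt_discr; pose proof (Rle_abs (- b)); rewrite Rabs_Ropp in *.
    pose proof (pow2_ge_0 v); unfold u; lra. }
  assert (hfactor : (v ^ 2 - u) * (v ^ 2 + u + b) = 0).
  { replace ((v ^ 2 - u) * (v ^ 2 + u + b))
      with ((v ^ 4 + b * v ^ 2 + c) - (u ^ 2 + b * u + c)) by ring.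
    rewrite hQ, hu; ring. }
  assert (hvu : v ^ 2 = u).
  { destruct (Rmult_integral _ _ hfactor); lra. }
  unfold biquad_root; fold u.
  rewrite <- hvu, sqrt_pow2; lra.
Qed.

End BiquadNegativeConstant.

Lemma eqQ_iff_biquad s Y tau w : 0 < Y ->
  eqQ s Y tau w <->
  w ^ 4 + xplus s Y tau ^ 2 * w ^ 2
  + s ^ 2 * (3 * xplus s Y tau - 1) * (1 - xplus s Y tau) = 0.
Proof.
  intro hY; unfold eqQ, xplus, pc, qc, cc, alphac.
  split; intro H; rewrite <- H; field; lra.
Qed.

Lemma omega_plus_biquad_root s Y tau :
  omega_plus s Y tau =
  biquad_root (xplus s Y tau ^ 2)
    (s ^ 2 * (3 * xplus s Y tau - 1) * (1 - xplus s Y tau)).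
Proof.
  unfold omega_plus, biquad_root; cbv zeta.
  do 4 f_equal; ring.
Qed.

Section Equilibrium.

Variables s Y : R.
Hypotheses (hs : 0 < s) (hY : 0 < Y).

Lemma xplus_0 : xplus s Y 0 = s / Y.
Proof. unfold xplus; rewrite Rmult_0_r, exp_0; ring. Qed.

Lemma xplus_tau_star : xplus s Y (tau_star s Y) = / 3.
Proof.
  unfold xplus, tau_star.
  replace (s * (/ s * ln (Y / (3 * s)))) with (ln (Y / (3 * s))) by (field; lra).
  rewrite exp_ln by (apply Rdiv_lt_0_compat; lra).
  field; lra.
Qed.

Lemma xplus_increasing t1 t2 : t1 < t2 -> xplus s Y t1 < xplus s Y t2.
Proof.
  intro H; unfold xplus.
  apply Rmult_lt_compat_l; [apply Rdiv_lt_0_compat; lra |].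
  apply exp_increasing, Rmult_lt_compat_l; assumption.
Qed.

Lemma tau_star_le_iff tau : tau_star s Y <= tau <-> / 3 <= xplus s Y tau.
Proof.
  rewrite <- xplus_tau_star; split; intro H.
  - destruct H as [H | <-]; [left; apply xplus_increasing, H | apply Rle_refl].
  - apply Rnot_lt_le; intro H'.
    apply (Rle_not_lt _ _ H), xplus_increasing, H'.
Qed.

Lemma xplus_bounds_before_tau_star tau :
  0 <= tau < tau_star s Y -> s / Y <= xplus s Y tau < / 3.
Proof.
  intros [h0 hstar]; rewrite <- xplus_0, <- xplus_tau_star.
  split; [| apply xplus_increasing, hstar].
  destruct h0 as [h0 | <-]; [left; apply xplus_increasing, h0 | apply Rle_refl].
Qed.

Lemma eqQ_no_pos_root_from_tau_star tau :
  0 < yplus s Y tau -> tau_star s Y <= tau ->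
  ~ exists w, 0 < w /\ eqQ s Y tau w.
Proof.
  intros hy hstar [w [hw hQ]].
  apply tau_star_le_iff in hstar.
  unfold yplus in hy; fold (xplus s Y tau) in hy.
  apply (eqQ_iff_biquad s Y tau w hY) in hQ.
  revert hQ.
  apply biquad_no_pos_root; [apply pow2_ge_0 | | exact hw].
  apply Rmult_le_pos; [apply Rmult_le_pos; [apply pow2_ge_0 |] |]; lra.
Qed.

Lemma eqQ_unique_pos_root_before_tau_star tau :
  tau < tau_star s Y ->
  0 < omega_plus s Y tau /\ eqQ s Y tau (omega_plus s Y tau) /\
  forall w, 0 < w -> eqQ s Y tau w -> w = omega_plus s Y tau.
Proof.
  intro hstar.
  assert (hx : xplus s Y tau < / 3)
    by (rewrite <- xplus_tau_star; apply xplus_increasing, hstar).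
  assert (hc : s ^ 2 * (3 * xplus s Y tau - 1) * (1 - xplus s Y tau) < 0).
  { assert (0 < s ^ 2) by (apply pow_lt; lra).
    assert (s ^ 2 * (3 * xplus s Y tau - 1) < 0) by nra.
    nra. }
  rewrite omega_plus_biquad_root.
  split; [| split].
  - apply biquad_root_pos; exact hc.
  - apply eqQ_iff_biquad; [exact hY |].
    apply biquad_root_spec; exact hc.
  - intros w hw hQ; apply biquad_pos_root_unique; [exact hc | exact hw |].
    apply eqQ_iff_biquad; assumption.
Qed.

End Equilibrium.

Lemma charC_imag_parts s Y tau b : charC s Y tau (0, b) ->
  - b ^ 2 + alphac s Y tau + cc s Y tau * cos (b * tau) + qc s * b * sin (b * tau) = 0 /\
  pc s Y tau * b + qc s * b * cos (b * tau) - cc s Y tau * sin (b * tau) = 0.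
Proof.
  unfold charC, Cexp; intro H.
  pose proof (f_equal fst H) as Hre; pose proof (f_equal snd H) as Him.
  simpl in Hre, Him.
  replace (- 0 * tau - - b * 0) with 0 in Hre, Him by ring.
  replace (- 0 * 0 + - b * tau) with (- (b * tau)) in Hre, Him by ring.
  rewrite exp_0, cos_neg, sin_neg in Hre, Him.
  split; nra.
Qed.

(* Isolate α − ω² and pω; their squares sum to (c² + q²ω²)(cos² + sin²). *)
Lemma eliminate_phase p q c al w co si :
  co ^ 2 + si ^ 2 = 1 ->
  - w ^ 2 + al + c * co + q * w * si = 0 ->
  p * w + q * w * co - c * si = 0 ->
  w ^ 4 + (p ^ 2 - q ^ 2 - 2 * al) * w ^ 2 + al ^ 2 - c ^ 2 = 0.
Proof.
  intros hcs hre him.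
  replace (w ^ 4 + (p ^ 2 - q ^ 2 - 2 * al) * w ^ 2 + al ^ 2 - c ^ 2)
    with ((al - w ^ 2) ^ 2 + (p * w) ^ 2 - q ^ 2 * w ^ 2 - c ^ 2) by ring.
  replace (al - w ^ 2) with (- (c * co + q * w * si)) by lra.
  replace (p * w) with (c * si - q * w * co) by lra.
  replace ((- (c * co + q * w * si)) ^ 2 + (c * si - q * w * co) ^ 2
           - q ^ 2 * w ^ 2 - c ^ 2)
    with ((c ^ 2 + q ^ 2 * w ^ 2) * (co ^ 2 + si ^ 2 - 1)) by ring.
  rewrite hcs; ring.
Qed.

Lemma charC_imag_eqQ s Y tau b : charC s Y tau (0, b) -> eqQ s Y tau (Rabs b).
Proof.
  intro H; destruct (charC_imag_parts _ _ _ _ H) as [hre him].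
  unfold eqQ.
  replace (Rabs b ^ 4) with ((Rabs b ^ 2) ^ 2) by ring.
  rewrite pow2_abs.
  replace ((b ^ 2) ^ 2) with (b ^ 4) by ring.
  apply (eliminate_phase _ _ _ _ _ (cos (b * tau)) (sin (b * tau))); [| assumption..].
  rewrite <- !Rsqr_pow2, Rplus_comm; apply sin2_cos2.
Qed.

Lemma purely_imaginary_inv lam :
  purely_imaginary lam -> exists b, lam = (0, b) /\ b <> 0.
Proof.
  destruct lam as [a b]; intros [ha hnz]; simpl in ha; subst a.
  exists b; split; [reflexivity |].
  intro; subst; apply hnz; reflexivity.
Qed.

Lemma no_imag_root_of_no_pos_eqQ_root s Y tau :
  (~ exists w, 0 < w /\ eqQ s Y tau w) ->
  ~ exists lam, purely_imaginary lam /\ charC s Y tau lam.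
Proof.
  intros hnoQ [lam [hpi hC]].
  destruct (purely_imaginary_inv _ hpi) as [b [-> hb]].
  apply hnoQ; exists (Rabs b); split.
  - apply Rabs_pos_lt; exact hb.
  - apply charC_imag_eqQ; exact hC.
Qed.

Lemma charC_imag_root_at_0 s Y b : 0 < s -> 0 < Y -> charC s Y 0 (0, b) -> b = 0.
Proof.
  intros hs hY hC.
  destruct (charC_imag_parts _ _ _ _ hC) as [_ him].
  rewrite Rmult_0_r, cos_0, sin_0 in him.
  assert (hpq : pc s Y 0 + qc s = s / Y) by (unfold pc, qc; rewrite Rmult_0_r, exp_0; field; lra).
  assert (hprod : s / Y * b = 0) by (rewrite <- hpq; lra).
  destruct (Rmult_integral _ _ hprod) as [h | h]; [| exact h].
  exfalso; assert (0 < s / Y) by (apply Rdiv_lt_0_compat; lra); lra.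
Qed.

Lemma imag_root_before_tau_star s Y tau lam : 0 < s -> 0 < Y ->
  0 <= tau -> 0 < yplus s Y tau ->
  purely_imaginary lam -> charC s Y tau lam ->
  (0 < tau < tau_star s Y) /\
  (lam = (0, omega_plus s Y tau) \/ lam = (0, - omega_plus s Y tau)).
Proof.
  intros hs hY htau hy hpi hC.
  destruct (purely_imaginary_inv _ hpi) as [b [-> hb]].
  assert (hstar : tau < tau_star s Y).
  { apply Rnot_le_lt; intro hle.
    apply (no_imag_root_of_no_pos_eqQ_root s Y tau
             (eqQ_no_pos_root_from_tau_star s Y hs hY tau hy hle)).
    exists (0, b); split; assumption. }
  assert (hpos : 0 < tau).
  { destruct htau as [| <-]; [assumption |].
    exfalso; exact (hb (charC_imag_root_at_0 s Y b hs hY hC)). }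
  split; [split; assumption |].
  destruct (eqQ_unique_pos_root_before_tau_star s Y hs hY tau hstar)
    as [_ [_ huniq]].
  assert (habs : Rabs b = omega_plus s Y tau)
    by (apply huniq; [apply Rabs_pos_lt; exact hb | apply charC_imag_eqQ; exact hC]).
  unfold Rabs in habs; destruct (Rcase_abs b); [right | left]; f_equal; lra.
Qed.

Theorem theorem3p3 (s Y : R) (hs : 0 < s) (hY : 0 < Y) :
  (* part 1 *)
  omega_plus s Y (tau_star s Y) = 0 /\
  (forall tau : R, 0 <= tau -> 0 < xplus s Y tau -> 0 < yplus s Y tau ->
     tau_star s Y <= tau ->
     (~ exists omega : R, 0 < omega /\ eqQ s Y tau omega) /\
     (~ exists lam : C, purely_imaginary lam /\ charC s Y tau lam)) /\
  (/ 3 <= s / Y ->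
     tau_star s Y <= 0 /\
     forall tau : R, 0 <= tau -> 0 < xplus s Y tau -> 0 < yplus s Y tau ->
       ~ exists lam : C, purely_imaginary lam /\ charC s Y tau lam) /\
  (* part 2 *)
  (s / Y < / 3 ->
     0 < tau_star s Y /\
     (forall tau : R, 0 <= tau < tau_star s Y ->
        0 < xplus s Y tau -> 0 < yplus s Y tau ->
        (s / Y <= xplus s Y tau < / 3) /\
        (0 < omega_plus s Y tau /\ eqQ s Y tau (omega_plus s Y tau) /\
         forall omega : R, 0 < omega -> eqQ s Y tau omega ->
           omega = omega_plus s Y tau)) /\
     (forall tau : R, 0 <= tau -> 0 < xplus s Y tau -> 0 < yplus s Y tau ->
        forall lam : C, purely_imaginary lam -> charC s Y tau lam ->
          (0 < tau < tau_star s Y) /\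
          (lam = (0, omega_plus s Y tau) \/ lam = (0, - omega_plus s Y tau)))).
Proof.
  assert (hno : forall tau, 0 < yplus s Y tau -> tau_star s Y <= tau ->
            ~ exists lam : C, purely_imaginary lam /\ charC s Y tau lam)
    by (intros; apply no_imag_root_of_no_pos_eqQ_root,
          eqQ_no_pos_root_from_tau_star; assumption).
  split; [| split; [| split]].
  - rewrite omega_plus_biquad_root, xplus_tau_star by assumption.
    replace (s ^ 2 * (3 * / 3 - 1) * (1 - / 3)) with 0 by field.
    apply biquad_root_c0, pow2_ge_0.
  - intros tau _ _ hy hstar; split;
      [apply eqQ_no_pos_root_from_tau_star | apply hno]; assumption.
  - intro hsY.
    assert (hstar : tau_star s Y <= 0)
      by (apply tau_star_le_iff; [| | rewrite xplus_0]; assumption).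
    split; [exact hstar |].
    intros tau htau _ hy; apply hno; [exact hy | lra].
  - intro hsY.
    assert (hstar : 0 < tau_star s Y).
    { apply Rnot_le_lt; intro hle.
      apply tau_star_le_iff in hle; [| assumption..].
      rewrite xplus_0 in hle; lra. }
    split; [exact hstar | split].
    + intros tau htau _ _; split;
        [apply xplus_bounds_before_tau_star | apply eqQ_unique_pos_root_before_tau_star];
        try assumption; apply htau.
    + intros tau htau _ hy lam; apply imag_root_before_tau_star; assumption.
Qed.
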